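(* For every $\epsilon\in(-\tfrac12,\tfrac12)$ and all partitions $p,p'$ of $n$, if $p'\le p$ in the dominance order then $|v_\epsilon(p)|\le|v_\epsilon(p')|$, where $|\cdot|$ is the Euclidean norm on $\mathbb R^n$.
   Context: For a partition $p=[p_1,p_2,p_3,\dots]$ of $n$ ($p_1\ge p_2\ge\cdots$), dominance order: $p'\le p$ iff $\sum_{i\le j}p'_i\le\sum_{i\le j}p_i$ for all $j$. For $\epsilon\in(-\frac12,\frac12)$ define $v_\epsilon(p)\in(\epsilon+\mathbb Z)^n$ as the weakly decreasing rearrangement of the $n$-tuple containing, when $\epsilon\ge0$: $\epsilon$ with multiplicity $p_1$, $\epsilon-1$ with multiplicity $p_2$, $\epsilon+1$ with multiplicity $p_3$, $\epsilon-2$ with multiplicity $p_4$, $\epsilon+2$ with multiplicity $p_5$, and so on; when $\epsilon<0$: $\epsilon$ with multiplicity $p_1$, $\epsilon+1$ with multiplicity $p_2$, $\epsilon-1$ with multiplicity $p_3$, $\epsilon+2$ with multiplicity $p_4$, $\epsilon-2$ with multiplicity $p_5$, and so on. *)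

From HB Require Import structures.
From mathcomp Require Import all_boot all_order all_algebra.
From mathcomp Require Import reals.
Set Implicit Arguments. Unset Strict Implicit. Unset Printing Implicit Defensive.
Import Order.TTheory GRing.Theory Num.Theory.
Local Open Scope ring_scope.

Definition is_partition (n : nat) (p : seq nat) : bool :=
  [&& sorted geq p, all (fun x => 0 < x)%N p & sumn p == n].

Definition dominated (p' p : seq nat) : Prop :=
  forall j : nat, (sumn (take j p') <= sumn (take j p))%N.

(* Integer offset of the i-th part (0-based index i, i.e. part p_{i+1}):
   eps >= 0 : 0, -1, +1, -2, +2, ...
   eps < 0  : 0, +1, -1, +2, -2, ... *)
Definition offset (R : realType) (eps : R) (i : nat) : int :=
  let k : int := ((i.+1)./2)%:Z in
  if (0 <= eps) then (if odd i then - k else k)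
  else (if odd i then k else - k).

Definition v_eps (R : realType) (eps : R) (p : seq nat) : seq R :=
  sort (fun x y : R => y <= x)
    (flatten [seq nseq (nth 0%N p i) (eps + (offset eps i)%:~R) | i <- iota 0 (size p)]).

Definition euclid_norm (R : realType) (v : seq R) : R :=
  Num.sqrt (\sum_(x <- v) x ^+ 2).

From HB Require Import structures.
From mathcomp Require Import all_boot all_order all_algebra.
From mathcomp Require Import reals.
From mathcomp Require Import ring lra.
Import Order.TTheory GRing.Theory Num.Theory.
Local Open Scope ring_scope.

(* The squared norm of v_eps(p) is sum_i p_i c_i with c_i = (eps + offset_i)^2.
   For |eps| <= 1/2 the absolute values |eps|, 1 - |eps|, 1 + |eps|, 2 - |eps|,
   ... of the entries eps + offset_i increase with i, so c is nondecreasing.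
   Summation by parts rewrites sum_i p_i c_i as
   n c_N - sum_i (p_1 + ... + p_(i+1)) (c_(i+1) - c_i), which can only decrease
   when the partial sums of p increase, i.e. when p moves up in dominance. *)

Lemma sumr_by_parts (R : comPzRingType) (a c : nat -> R) (N : nat) :
  \sum_(i < N) a i * c i =
  (\sum_(i < N) a i) * c N
    - \sum_(i < N) (\sum_(j < i.+1) a j) * (c i.+1 - c i).
Proof.
elim: N => [|N IH]; first by rewrite !big_ord0 mul0r subr0.
rewrite big_ord_recr /= IH [in RHS]big_ord_recr /= [in RHS]big_ord_recr /=.
rewrite [\sum_(j < N.+1) a j]big_ord_recr /=; ring.
Qed.

Lemma ler_weighted_sum_dominated (R : numDomainType) (a b c : nat -> R)
    (N : nat) :
  (forall i, (i < N)%N -> c i <= c i.+1) ->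
  (forall k, (k <= N)%N -> \sum_(i < k) b i <= \sum_(i < k) a i) ->
  \sum_(i < N) a i = \sum_(i < N) b i ->
  \sum_(i < N) a i * c i <= \sum_(i < N) b i * c i.
Proof.
move=> c_incr dom total; rewrite !sumr_by_parts total lerD2l lerN2.
apply: ler_sum => i _; apply: ler_wpM2r; first by rewrite subr_ge0 c_incr.
exact: dom (ltn_ord i).
Qed.

Lemma natr_sumn_take (R : pzSemiRingType) (q : seq nat) (k : nat) :
  (sumn (take k q))%:R = \sum_(i < k) (nth 0%N q i)%:R :> R.
Proof.
elim: q k => [|x q IH] [|k] /=; rewrite ?big_ord0 //.
  by rewrite big1 // => i _; rewrite nth_nil.
by rewrite big_ord_recl natrD IH.
Qed.

Section Entries.
Context {R : realType} (eps : R).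

Definition entry (i : nat) : R := eps + (offset eps i)%:~R.

Lemma norm_entry_even (m : nat) : `|entry m.*2| = m%:R + `|eps|.
Proof.
have m_ge0 : 0 <= m%:R :> R by rewrite ler0n.
rewrite /entry /offset odd_double /= uphalf_double.
have [e0|e0] := lerP 0 eps; rewrite ?mulrNz pmulrn.
  by rewrite (ger0_norm e0) ger0_norm; lra.
by rewrite (ltr0_norm e0) ltr0_norm; lra.
Qed.

Lemma norm_entry_odd (m : nat) :
  `|eps| <= 1 -> `|entry m.*2.+1| = m.+1%:R - `|eps|.
Proof.
have m_ge0 : 0 <= m%:R :> R by rewrite ler0n.
rewrite /entry /offset /= odd_double /= doubleK mulrSr.
have [e0|e0] := lerP 0 eps; rewrite ?mulrNz pmulrn => eps_le1.
  by rewrite (ger0_norm e0) in eps_le1 *; rewrite ler0_norm; lra.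
by rewrite (ltr0_norm e0) in eps_le1 *; rewrite ger0_norm; lra.
Qed.

Lemma norm_entry_nondecreasing (i : nat) :
  `|eps| <= 1 / 2 -> `|entry i| <= `|entry i.+1|.
Proof.
move=> eps_half; have eps_le1 : `|eps| <= 1 by lra.
have := normr_ge0 eps; rewrite -[i]odd_double_half.
case: (odd i); rewrite ?add0n ?add1n.
  by rewrite norm_entry_odd // -doubleS norm_entry_even mulrSr; lra.
by rewrite norm_entry_even norm_entry_odd // mulrSr; lra.
Qed.

Lemma sqr_entry_nondecreasing (i : nat) :
  `|eps| <= 1 / 2 -> entry i ^+ 2 <= entry i.+1 ^+ 2.
Proof.
move/(norm_entry_nondecreasing i).
by rewrite -ler_sqr ?nnegrE // !real_normK ?num_real.
Qed.

Lemma sum_sqr_v_eps (q : seq nat) (N : nat) :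
  (size q <= N)%N ->
  \sum_(x <- v_eps eps q) x ^+ 2 = \sum_(i < N) (nth 0%N q i)%:R * entry i ^+ 2.
Proof.
move=> szN; rewrite /v_eps (perm_big _ (permEl (perm_sort _ _))).
rewrite big_flatten big_map.
under eq_bigr do rewrite big_nseq iter_addr_0 -mulr_natl.
rewrite -(subn0 (size q)) -/(index_iota 0 _) big_mkord.
rewrite (big_ord_widen _ (fun i => (nth 0%N q i)%:R * entry i ^+ 2) szN).
rewrite big_mkcond; apply: eq_bigr => i _.
case: ltnP => // /(nth_default 0%N) ->.
by rewrite mul0r.
Qed.

End Entries.

Theorem lemmaA6 (R : realType) (eps : R) (n : nat) (p p' : seq nat) :
  - (1 / 2) < eps -> eps < 1 / 2 ->
  is_partition n p -> is_partition n p' ->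
  dominated p' p ->
  euclid_norm (v_eps eps p) <= euclid_norm (v_eps eps p').
Proof.
move=> eps_gt eps_lt /and3P[_ _ /eqP sum_p] /and3P[_ _ /eqP sum_p'] dom.
have eps_half : `|eps| <= 1 / 2 by rewrite ler_norml; lra.
rewrite /euclid_norm ler_wsqrtr //.
set N := maxn (size p) (size p').
rewrite (sum_sqr_v_eps _ p N) ?leq_maxl // (sum_sqr_v_eps _ p' N) ?leq_maxr //.
apply: (@ler_weighted_sum_dominated R (fun i => (nth 0%N p i)%:R)
         (fun i => (nth 0%N p' i)%:R) (fun i => entry eps i ^+ 2))
  => [i _|k _|].
- exact: sqr_entry_nondecreasing.
- by rewrite -!natr_sumn_take ler_nat; apply: dom.
by rewrite -!natr_sumn_take !take_oversize ?leq_maxl ?leq_maxr // sum_p sum_p'.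
Qed.
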